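(* Let $L$ be a complete lattice with a t-norm $\otimes$ and a t-conorm $\oplus$, and let $\Gamma=\{f_i:L^n\to L: i=1,\dots,n\}$ be a distributive family on $\langle L,\oplus,\otimes\rangle$. Then for every $(a_1,\dots,a_n)\in L^n$, $$\bigwedge_{i=1}^n a_i\ \le\ DYOWA_\Gamma(a_1,\dots,a_n)\ \le\ \bigvee_{i=1}^n a_i.$$
   Context: A t-norm (resp. t-conorm) on a complete lattice $L$ is an isotonic, commutative, associative binary operation $\otimes$ (resp. $\oplus$) on $L$ with neutral element $\top_L$ (resp. $\bot_L$). $n$-ary versions are defined by left folding: $\bigoplus_{i=1}^n x_i=(\cdots((x_1\oplus x_2)\oplus x_3)\cdots)\oplus x_n$. A finite family $\Gamma=\{f_i:L^n\to L: i=1,\dots,n\}$ is a weight function family if $\bigoplus_{i=1}^n f_i(\vec a)=\top_L$ for every $\vec a\in L^n$. It is a distributive family if moreover $c\otimes\bigl(\bigoplus_{i=1}^n f_i(\vec a)\bigr)=\bigoplus_{i=1}^n (c\otimes f_i(\vec a))$ for all $c\in L$ and $\vec a\in L^n$. The Lizasoain–Moreno function is $\mathscr{LM}(a_1,\dots,a_n)=(b_1,\dots,b_n)$ with $b_k=\bigvee_{\{j_1<\dots<j_k\}\subseteq\{1,\dots,n\}} a_{j_1}\wedge\cdots\wedge a_{j_k}$ (join over all $k$-element subsets). $DYOWA_\Gamma(\vec a)=\bigoplus_{i=1}^n \bigl(f_i(\vec a)\otimes b_i\bigr)$, where $(b_1,\dots,b_n)=\mathscr{LM}(\vec a)$. 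*)

From HB Require Import structures.
From mathcomp Require Import all_boot all_order.
Set Implicit Arguments. Unset Strict Implicit. Unset Printing Implicit Defensive.
Import Order.TTheory.
Local Open Scope order_scope.

Section Defs.
Context {disp : Order.disp_t} {L : tbLatticeType disp}.

Definition complete_lattice : Prop :=
  forall S : L -> Prop, exists s : L,
    (forall x, S x -> x <= s) /\ (forall u, (forall x, S x -> x <= u) -> s <= u).

Definition isotonic (op : L -> L -> L) : Prop :=
  forall x x' y y', x <= x' -> y <= y' -> op x y <= op x' y'.

Definition is_tnorm (op : L -> L -> L) : Prop :=
  [/\ isotonic op, commutative op, associative op & left_id (\top : L) op].

Definition is_tconorm (op : L -> L -> L) : Prop :=
  [/\ isotonic op, commutative op, associative op & left_id (\bot : L) op].

(* n-ary version by left folding: ((x_1 op x_2) op x_3) ... op x_n.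
   Starting the fold at \bot is harmless since \bot is neutral for a t-conorm. *)
Definition nfold (op : L -> L -> L) (n : nat) (x : 'I_n -> L) : L :=
  foldl op \bot [seq x i | i <- enum 'I_n].

Definition weight_family (oplus : L -> L -> L) (n : nat)
    (f : 'I_n -> ('I_n -> L) -> L) : Prop :=
  forall a : 'I_n -> L, nfold oplus (fun i => f i a) = \top.

Definition distributive_family (oplus otimes : L -> L -> L) (n : nat)
    (f : 'I_n -> ('I_n -> L) -> L) : Prop :=
  weight_family oplus f /\
  forall (c : L) (a : 'I_n -> L),
    otimes c (nfold oplus (fun i => f i a)) = nfold oplus (fun i => otimes c (f i a)).

(* Lizasoain-Moreno function; index k : 'I_n stands for k.+1 (1-based),
   so b_k is the join over all (k.+1)-element subsets of the meets. *)
Definition LM (n : nat) (a : 'I_n -> L) (k : 'I_n) : L :=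
  \join_(A : {set 'I_n} | #|A| == k.+1) \meet_(j in A) a j.

Definition DYOWA (oplus otimes : L -> L -> L) (n : nat)
    (f : 'I_n -> ('I_n -> L) -> L) (a : 'I_n -> L) : L :=
  nfold oplus (fun i => otimes (f i a) (LM a i)).

End Defs.

From HB Require Import structures.
From mathcomp Require Import all_boot all_order.
Import Order.TTheory.
Local Open Scope order_scope.

(* Every Lizasoain-Moreno coefficient b_k lies between the meet and the join
   of the a_i.  For a distributive family, weighting a constant c gives back
   c, since c = c (x) (sum_i f_i) = sum_i (c (x) f_i); hence DYOWA, being
   isotonic in the b_k, is squeezed between the same two constants. *)

Section Aggregation.
Context {disp : Order.disp_t} {L : tbLatticeType disp}.

Lemma foldl_mono (op : L -> L -> L) (T : Type) (x y : T -> L) (s : seq T) :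
  isotonic op -> (forall i, x i <= y i) -> forall z0 z1, z0 <= z1 ->
  foldl op z0 [seq x i | i <- s] <= foldl op z1 [seq y i | i <- s].
Proof.
move=> Hop Hxy; elim: s => [|t s IH] z0 z1 Hz //=.
by apply: IH; apply: Hop.
Qed.

Lemma nfold_mono (op : L -> L -> L) (n : nat) (x y : 'I_n -> L) :
  isotonic op -> (forall i, x i <= y i) -> nfold op x <= nfold op y.
Proof. by move=> Hop Hxy; apply: foldl_mono. Qed.

Lemma meet_le_LM (n : nat) (a : 'I_n -> L) (k : 'I_n) :
  \meet_(i < n) a i <= LM a k.
Proof.
have Hk : (k.+1 <= n)%N := ltn_ord k.
set A := [set widen_ord Hk i | i : 'I_k.+1].
have cardA : #|A| == k.+1.
  rewrite card_imset ?card_ord //.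
  by move=> i j /(congr1 val) /= /val_inj.
apply: (joins_min (j := A)) => //.
by apply/meetsP => j _; apply: meets_inf.
Qed.

Lemma LM_le_join (n : nat) (a : 'I_n -> L) (k : 'I_n) :
  LM a k <= \join_(i < n) a i.
Proof.
apply/joinsP => A /eqP cardA.
have /card_gt0P [j jA] : (0 < #|A|)%N by rewrite cardA.
by apply: (meets_max (j := j)) => //; apply: joins_sup.
Qed.

Context {otimes oplus : L -> L -> L} {n : nat} {f : 'I_n -> ('I_n -> L) -> L}.
Hypothesis Hot : is_tnorm otimes.
Hypothesis Hf : distributive_family oplus otimes f.

Lemma nfold_weighted_cst (a : 'I_n -> L) (c : L) :
  nfold oplus (fun i => otimes (f i a) c) = c.
Proof.
case: Hot => _ Icomm _ Iid; case: Hf => Hweight Hdistr.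
transitivity (otimes c (nfold oplus (fun i => f i a))).
  by rewrite Hdistr /nfold; congr foldl; apply: eq_map => i; rewrite Icomm.
by rewrite Hweight Icomm Iid.
Qed.

Hypothesis Hop : isotonic oplus.

Lemma nfold_weighted_ge (a : 'I_n -> L) (c : L) (b : 'I_n -> L) :
  (forall i, c <= b i) -> c <= nfold oplus (fun i => otimes (f i a) (b i)).
Proof.
case: Hot => Imono _ _ _ Hcb.
rewrite -{1}(nfold_weighted_cst a c).
by apply: nfold_mono => // i; apply: Imono.
Qed.

Lemma nfold_weighted_le (a : 'I_n -> L) (c : L) (b : 'I_n -> L) :
  (forall i, b i <= c) -> nfold oplus (fun i => otimes (f i a) (b i)) <= c.
Proof.
case: Hot => Imono _ _ _ Hbc.
rewrite -[X in _ <= X](nfold_weighted_cst a c).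
by apply: nfold_mono => // i; apply: Imono.
Qed.

End Aggregation.

Theorem proposition4 (disp : Order.disp_t) (L : tbLatticeType disp)
  (hL : complete_lattice (L := L))
  (otimes oplus : L -> L -> L)
  (Hot : is_tnorm otimes) (Hop : is_tconorm oplus)
  (n : nat) (f : 'I_n -> ('I_n -> L) -> L)
  (Hf : distributive_family oplus otimes f) :
  forall a : 'I_n -> L,
    \meet_(i < n) a i <= DYOWA oplus otimes f a /\
    DYOWA oplus otimes f a <= \join_(i < n) a i.
Proof.
move=> a; have [Omono _ _ _] := Hop; rewrite /DYOWA.
split.
- by apply: (nfold_weighted_ge Hot Hf Omono) => i; apply: meet_le_LM.
- by apply: (nfold_weighted_le Hot Hf Omono) => i; apply: LM_le_join.
Qed.
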